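(* Let $N$ and $M$ be $G$-graded near-rings with multiplicative identity. If every proper ideal of $N$ and every proper ideal of $M$ is a product of graded prime ideals, then every proper ideal of $N\times M$ is a product of graded prime ideals of $N\times M$.
   Context: A (right) near-ring is a set $N$ with two binary operations $+$ and $\cdot$ such that $(N,+)$ is a group (not necessarily abelian), $(N,\cdot)$ is a semigroup, and $(a+b)c=ac+bc$. An ideal of $N$ is a normal subgroup $I$ of $(N,+)$ such that $ni\in I$ and $(n+i)m-nm\in I$ for all $n,m\in N$, $i\in I$. For ideals $A_1,\dots,A_n$, the product $A_1\cdots A_n$ is the set of products $\{a_1\cdots a_n: a_i\in A_i\}$. Let $G$ be a multiplicative monoid with identity. $N$ is $G$-graded if there is a family $\{N_\sigma\}_{\sigma\in G}$ of normal subgroups of $(N,+)$ with $N=\bigoplus_{\sigma\in G}N_\sigma$ and $N_\sigma N_\tau\subseteq N_{\sigma\tau}$. For $X\subseteq N$, $X_g=X\cap N_g$. An ideal $I$ is graded if $I=\bigoplus_g I_g$. The direct product $N\times M$ has componentwise operations and is $G$-graded by $(N\times M)_g=N_g\times M_g$. For subsets $X,Y$, $XY=\{xy:x\in X,y\in Y\}$. A graded ideal $P$ is graded prime if $P\neq N$ and for all ideals $A,B$ of $N$ and all $g,h\in G$: $A_gB_h\subseteq P_{gh}$ implies $A_g\subseteq P_g$ or $B_h\subseteq P_h$. *)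

From Stdlib Require Import List.
Import ListNotations.
Set Implicit Arguments.
Unset Strict Implicit.

Record monoid := Monoid {
  mcar :> Type;
  mop : mcar -> mcar -> mcar;
  mone : mcar;
  mopA : forall a b c, mop a (mop b c) = mop (mop a b) c;
  mop1l : forall a, mop mone a = a;
  mop1r : forall a, mop a mone = a
}.

Record nearring := NearRing {
  nr :> Type;
  nadd : nr -> nr -> nr;
  nopp : nr -> nr;
  nzero : nr;
  nmul : nr -> nr -> nr;
  none : nr;
  naddA : forall a b c, nadd a (nadd b c) = nadd (nadd a b) c;
  nadd0l : forall a, nadd nzero a = a;
  nadd0r : forall a, nadd a nzero = a;
  naddNl : forall a, nadd (nopp a) a = nzero;
  naddNr : forall a, nadd a (nopp a) = nzero;
  nmulA : forall a b c, nmul a (nmul b c) = nmul (nmul a b) c;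
  nmulDl : forall a b c, nmul (nadd a b) c = nadd (nmul a c) (nmul b c);
  nmul1l : forall a, nmul none a = a;
  nmul1r : forall a, nmul a none = a
}.

Section Defs.
Variable N : nearring.

Definition nsum (l : list N) : N := fold_right (@nadd N) (@nzero N) l.

Definition normal_subgroup (I : N -> Prop) : Prop :=
  I (@nzero N) /\
  (forall a b, I a -> I b -> I (nadd a b)) /\
  (forall a, I a -> I (nopp a)) /\
  (forall n i, I i -> I (nadd (nadd n i) (nopp n))).

Definition ideal (I : N -> Prop) : Prop :=
  normal_subgroup I /\
  (forall n i, I i -> I (nmul n i)) /\
  (forall n m i, I i -> I (nadd (nmul (nadd n i) m) (nopp (nmul n m)))).

Definition proper (I : N -> Prop) : Prop := ~ (forall x, I x).

Variable G : monoid.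

(* N = (+)_{g in G} N_g : every element is a finite sum of homogeneous
   components with distinct degrees, and such an expression is unique
   (independence: a sum of homogeneous elements of distinct degrees is 0
   only if all of them are 0). *)
Definition graded (Ng : G -> N -> Prop) : Prop :=
  (forall g, normal_subgroup (Ng g)) /\
  (forall x, exists l : list (G * N),
       NoDup (map fst l) /\ Forall (fun p => Ng (fst p) (snd p)) l /\
       x = nsum (map snd l)) /\
  (forall l : list (G * N),
       NoDup (map fst l) -> Forall (fun p => Ng (fst p) (snd p)) l ->
       nsum (map snd l) = nzero N -> Forall (fun p => snd p = nzero N) l) /\
  (forall g h a b, Ng g a -> Ng h b -> Ng (mop g h) (nmul a b)).

Variable Ng : G -> N -> Prop.

Definition hom (X : N -> Prop) (g : G) : N -> Prop := fun x => X x /\ Ng g x.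

Definition graded_ideal (I : N -> Prop) : Prop :=
  ideal I /\
  forall x, I x -> exists l : list (G * N),
       NoDup (map fst l) /\ Forall (fun p => hom I (fst p) (snd p)) l /\
       x = nsum (map snd l).

Definition graded_prime (P : N -> Prop) : Prop :=
  graded_ideal P /\ proper P /\
  forall (A B : N -> Prop) (g h : G), ideal A -> ideal B ->
    (forall a b, hom A g a -> hom B h b -> hom P (mop g h) (nmul a b)) ->
    (forall a, hom A g a -> hom P g a) \/ (forall b, hom B h b -> hom P h b).

Fixpoint prodset (l : list (N -> Prop)) : N -> Prop :=
  match l with
  | [] => fun x => x = none N
  | A :: l' => fun x => exists a b, A a /\ prodset l' b /\ x = nmul a b
  end.

Definition prod_of_graded_primes (I : N -> Prop) : Prop :=
  exists (P : N -> Prop) (Ps : list (N -> Prop)),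
    Forall graded_prime (P :: Ps) /\ forall x, I x <-> prodset (P :: Ps) x.

End Defs.

Section Prod.
Variables N M : nearring.

Definition prod_nearring : nearring.
Proof.
refine (@NearRing (N * M)%type
  (fun x y => (nadd (fst x) (fst y), nadd (snd x) (snd y)))
  (fun x => (nopp (fst x), nopp (snd x)))
  (nzero N, nzero M)
  (fun x y => (nmul (fst x) (fst y), nmul (snd x) (snd y)))
  (none N, none M) _ _ _ _ _ _ _ _ _);
  intros; simpl;
  repeat match goal with p : (_ * _)%type |- _ => destruct p end; simpl;
  f_equal; auto using naddA, nadd0l, nadd0r, naddNl, naddNr, nmulA, nmulDl,
    nmul1l, nmul1r.
Defined.

Variable G : monoid.
Definition prod_grading (Ng : G -> N -> Prop) (Mg : G -> M -> Prop)
  : G -> prod_nearring -> Prop :=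
  fun g x => Ng g (fst x) /\ Mg g (snd x).
End Prod.

(** An ideal [I] of [N × M] splits as [I₁ × I₂] with [I₁ = {x | (x,0) ∈ I}] and
    [I₂ = {y | (0,y) ∈ I}], because [(1,0)] and [(0,1)] act as projections.
    Pulling back along the projection, a graded prime [P] of [N] gives the graded
    prime [P × M] of [N × M], and [(P₁ × M)⋯(Pₖ × M) = P₁⋯Pₖ × M] since the
    second coordinate can be filled with [y·1⋯1].  Symmetrically on the [M] side,
    and [(I₁ × M)(N × I₂) = I₁ × I₂] because [(x,y) = (x,1)(1,y)].  When one of
    [I₁], [I₂] is the whole ring the other factorization alone suffices. *)

From Stdlib Require Import List Classical ClassicalEpsilon.
Import ListNotations.
Set Implicit Arguments.
Unset Strict Implicit.

Section NearRingFacts.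
Variable N : nearring.

Lemma nadd_cancel_l (x y z : N) : nadd x y = nadd x z -> y = z.
Proof.
  intro E. rewrite <- (nadd0l y), <- (nadd0l z), <- (naddNl x), <- !naddA, E.
  reflexivity.
Qed.

Lemma nmul0l (m : N) : nmul (nzero N) m = nzero N.
Proof.
  apply (nadd_cancel_l (x := nmul (nzero N) m)).
  rewrite <- nmulDl, nadd0l, nadd0r. reflexivity.
Qed.

Lemma nopp0 : nopp (nzero N) = nzero N.
Proof. rewrite <- (nadd0l (nopp (nzero N))). apply naddNr. Qed.

Lemma ideal_mull (I : N -> Prop) n i : ideal I -> I i -> I (nmul n i).
Proof. intros [_ [H _]] Hi. auto. Qed.

Lemma ideal_mulr (I : N -> Prop) i m : ideal I -> I i -> I (nmul i m).
Proof.
  intros [_ [_ H]] Hi. specialize (H (nzero N) m i Hi).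
  rewrite nadd0l, nmul0l, nopp0, nadd0r in H. exact H.
Qed.

Lemma ideal_full : ideal (fun _ : N => True).
Proof. repeat split. Qed.

End NearRingFacts.

Definition preim (T R : Type) (f : T -> R) (P : R -> Prop) : T -> Prop :=
  fun t => P (f t).

Definition setmul (T : nearring) (X Y : T -> Prop) : T -> Prop :=
  fun z => exists a b, X a /\ Y b /\ z = nmul a b.

Record nr_morphism (T R : nearring) (f : T -> R) : Prop := {
  morphD : forall a b, f (nadd a b) = nadd (f a) (f b);
  morphM : forall a b, f (nmul a b) = nmul (f a) (f b)
}.

Section Morphism.
Variables (T R : nearring) (f : T -> R).
Hypothesis Hf : nr_morphism f.

Lemma morph0 : f (nzero T) = nzero R.
Proof.
  apply (nadd_cancel_l (x := f (nzero T))).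
  rewrite <- (morphD Hf), !nadd0r. reflexivity.
Qed.

Lemma morphN a : f (nopp a) = nopp (f a).
Proof.
  apply (nadd_cancel_l (x := f a)). rewrite <- (morphD Hf), !naddNr. exact morph0.
Qed.

Lemma ideal_preim (P : R -> Prop) : ideal P -> ideal (preim f P).
Proof.
  intros [[H0 [HD [HN HJ]]] [Hl Hr]]. unfold preim.
  split; [split; [|split; [|split]] | split]; intros;
    rewrite ?morph0, ?(morphD Hf), ?morphN, ?(morphM Hf), ?(morphD Hf); auto.
Qed.

End Morphism.

Section Products.
Variable T : nearring.

Lemma prodset_app (L1 L2 : list (T -> Prop)) z :
  prodset (L1 ++ L2) z <-> setmul (prodset L1) (prodset L2) z.
Proof.
  revert z. induction L1 as [|A L1 IH]; intro z; cbn [app prodset].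
  - split.
    + intro H. exists (none T), z. split; [reflexivity | split; [exact H |]].
      symmetry; apply nmul1l.
    + intros [a [b [-> [H ->]]]]. rewrite nmul1l. exact H.
  - split.
    + intros [a [b [Ha [Hb ->]]]]. apply IH in Hb.
      destruct Hb as [c [d [Hc [Hd ->]]]].
      exists (nmul a c), d. split; [exists a, c; auto | split; [exact Hd | apply nmulA]].
    + intros [a [b [[c [d [Hc [Hd ->]]]] [Hb ->]]]].
      exists c, (nmul d b). split; [exact Hc | split; [apply IH; exists d, b; auto |]].
      symmetry; apply nmulA.
Qed.

Lemma setmul_ext (X X' Y Y' : T -> Prop) z :
  (forall x, X x <-> X' x) -> (forall y, Y y <-> Y' y) ->
  setmul X Y z <-> setmul X' Y' z.
Proof.
  intros HX HY. split; intros [a [b [Ha [Hb ->]]]]; exists a, b;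
    rewrite ?HX, ?HY in *; auto.
Qed.

Variables (G : monoid) (Tg : G -> T -> Prop).

Lemma prod_of_graded_primes_ext (X Y : T -> Prop) :
  (forall z, X z <-> Y z) -> prod_of_graded_primes Tg X -> prod_of_graded_primes Tg Y.
Proof.
  intros HXY [P [Ps [Hprime HX]]]. exists P, Ps. split; [exact Hprime |].
  intro z. rewrite <- HXY. apply HX.
Qed.

Lemma prod_of_graded_primes_setmul (X Y : T -> Prop) :
  prod_of_graded_primes Tg X -> prod_of_graded_primes Tg Y ->
  prod_of_graded_primes Tg (setmul X Y).
Proof.
  intros [P [Ps [HP HX]]] [Q [Qs [HQ HY]]].
  exists P, (Ps ++ Q :: Qs). split.
  - change (Forall (graded_prime Tg) ((P :: Ps) ++ Q :: Qs)). apply Forall_app; auto.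
  - intro z. change (P :: Ps ++ Q :: Qs) with ((P :: Ps) ++ Q :: Qs).
    rewrite prodset_app. apply setmul_ext; auto.
Qed.

End Products.

Section Preimage.
Variables (T R : nearring) (pi : T -> R).
Hypothesis pi_mul : forall a b, pi (nmul a b) = nmul (pi a) (pi b).
Hypothesis pi_one : pi (none T) = none R.

Lemma prodset_preim (L : list (R -> Prop)) z :
  prodset (map (preim pi) L) z -> prodset L (pi z).
Proof.
  revert z; induction L as [|A L IH]; intros z; simpl.
  - intros ->. exact pi_one.
  - intros [a [b [Ha [Hb ->]]]]. exists (pi a), (pi b). auto.
Qed.

Variable kappa : R -> T.
Hypothesis kappa_mul : forall a b, kappa (nmul a b) = nmul (kappa a) (kappa b).
Hypothesis kappa_one : kappa (none R) = none T.
Hypothesis pi_kappa : forall x, pi (kappa x) = x.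

Lemma prodset_preim_section (L : list (R -> Prop)) x :
  prodset L x -> prodset (map (preim pi) L) (kappa x).
Proof.
  revert x; induction L as [|A L IH]; intros x; simpl.
  - intros ->. exact kappa_one.
  - intros [a [b [Ha [Hb ->]]]]. exists (kappa a), (kappa b).
    unfold preim. rewrite pi_kappa, kappa_mul. auto.
Qed.

Variables (G : monoid) (Tg : G -> T -> Prop) (Rg : G -> R -> Prop).

Lemma prod_of_graded_primes_preim (I : R -> Prop) :
  (forall P, graded_prime Rg P -> graded_prime Tg (preim pi P)) ->
  (forall P L z, prodset (map (preim pi) (P :: L)) z <-> prodset (P :: L) (pi z)) ->
  prod_of_graded_primes Rg I -> prod_of_graded_primes Tg (preim pi I).
Proof.
  intros Hprime Hprod [P [Ps [HP HI]]].
  exists (preim pi P), (map (preim pi) Ps). split.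
  - change (Forall (graded_prime Tg) (map (preim pi) (P :: Ps))).
    apply Forall_map. eapply Forall_impl; [exact Hprime | exact HP].
  - intro z. change (preim pi P :: map (preim pi) Ps) with (map (preim pi) (P :: Ps)).
    rewrite Hprod. apply HI.
Qed.

End Preimage.

(* A graded prime pulls back along a graded projection [pi] that has a graded
   section [iota] such that [iota ∘ pi] is left multiplication by some [e];
   for [N × M] these are [fst], [x ↦ (x,0)] and [e = (1,0)]. *)
Section PrimePreimage.
Variables (G : monoid) (T R : nearring) (Tg : G -> T -> Prop) (Rg : G -> R -> Prop).
Hypothesis HR : graded Rg.
Variables (pi : T -> R) (iota : R -> T) (e : T).
Hypothesis iota_morph : nr_morphism iota.
Hypothesis pi_iota : forall x, pi (iota x) = x.
Hypothesis iota_pi : forall t, iota (pi t) = nmul e t.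
Hypothesis pi_graded : forall g t, Tg g t -> Rg g (pi t).
Hypothesis iota_graded : forall g x, Rg g x -> Tg g (iota x).

Lemma graded_prime_preim (P : R -> Prop) :
  graded_ideal Tg (preim pi P) -> graded_prime Rg P -> graded_prime Tg (preim pi P).
Proof.
  intros Hgi [_ [Hproper Hprime]]. split; [exact Hgi | split].
  - intro Hall. apply Hproper. intro x. rewrite <- pi_iota. apply Hall.
  - intros A B g h HA HB Hsub.
    assert (Hpull : forall C (HC : ideal C) k c, hom Tg C k c -> hom Rg (preim iota C) k (pi c)).
    { intros C HC k c [Hc Hk]. split; [| exact (pi_graded Hk)].
      unfold preim. rewrite iota_pi. exact (ideal_mull e HC Hc). }
    destruct (Hprime (preim iota A) (preim iota B) g h
                (ideal_preim iota_morph HA) (ideal_preim iota_morph HB)) as [HAP | HBP].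
    + intros a b [Ha Hga] [Hb Hgb].
      assert (Hab : preim pi P (nmul (iota a) (iota b)))
        by (apply Hsub; split; auto).
      unfold preim in Hab. rewrite <- (morphM iota_morph), pi_iota in Hab.
      split; [exact Hab | destruct HR as [_ [_ [_ Hmul]]]; auto].
    + left. intros a Ha. destruct (HAP (pi a) (Hpull A HA g a Ha)) as [HPa _].
      split; [exact HPa | exact (proj2 Ha)].
    + right. intros b Hb. destruct (HBP (pi b) (Hpull B HB h b Hb)) as [HPb _].
      split; [exact HPb | exact (proj2 Hb)].
Qed.

End PrimePreimage.

Section Graded.
Variables (N : nearring) (G : monoid) (Ng : G -> N -> Prop).
Hypothesis HG : graded Ng.

Lemma graded_zero g : Ng g (nzero N).
Proof. destruct HG as [Hsub _]. apply (Hsub g). Qed.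

Lemma graded_disjoint g h z : g <> h -> Ng g z -> Ng h z -> z = nzero N.
Proof.
  intros Hgh Hg Hh. destruct HG as [Hsub [_ [Hindep _]]].
  assert (Hz : Forall (fun p : G * N => snd p = nzero N) [(g, z); (h, nopp z)]).
  { apply Hindep.
    - constructor; [simpl; intros [E | []]; congruence |].
      constructor; [intros [] | constructor].
    - repeat constructor; [exact Hg | apply (Hsub h); exact Hh].
    - unfold nsum; simpl. rewrite nadd0r. apply naddNr. }
  inversion Hz; auto.
Qed.

(* The commutator [a + b - a - b] lies in both [N_g] and [N_h]. *)
Lemma graded_commute g h a b : g <> h -> Ng g a -> Ng h b -> nadd a b = nadd b a.
Proof.
  intros Hgh Ha Hb. destruct HG as [Hsub _].
  assert (Hcomm : nadd (nadd (nadd a b) (nopp a)) (nopp b) = nzero N).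
  { apply (@graded_disjoint h g); auto.
    - apply (Hsub h); [apply (Hsub h); auto | apply (Hsub h); auto].
    - replace (nadd (nadd (nadd a b) (nopp a)) (nopp b))
        with (nadd a (nadd (nadd b (nopp a)) (nopp b))) by (rewrite !naddA; reflexivity).
      apply (Hsub g); [auto | apply (Hsub g); apply (Hsub g); auto]. }
  rewrite <- (nadd0l (nadd b a)), <- Hcomm, <- !naddA, (naddA (nopp b)), naddNl,
    nadd0l, naddNl, nadd0r. reflexivity.
Qed.

Definition deg_eq_dec (g h : G) : {g = h} + {g <> h} := excluded_middle_informative _.

Fixpoint component (l : list (G * N)) (g : G) : N :=
  match l with
  | [] => nzero N
  | (h, a) :: t => if deg_eq_dec h g then a else component t g
  end.

Lemma component_notin l g : ~ In g (map fst l) -> component l g = nzero N.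
Proof.
  induction l as [|[h a] t IH]; simpl; intro Hg; [reflexivity |].
  destruct (deg_eq_dec h g); [tauto | auto].
Qed.

Lemma component_ind (S : N -> Prop) l g :
  S (nzero N) -> (forall p, In p l -> fst p = g -> S (snd p)) -> S (component l g).
Proof.
  intros H0 H. induction l as [|[h a] t IH]; simpl; [exact H0 |].
  destruct (deg_eq_dec h g) as [E | _].
  - apply (H (h, a)); simpl; auto.
  - apply IH. intros p Hp. apply H. simpl; auto.
Qed.

Lemma component_graded l g :
  Forall (fun p => Ng (fst p) (snd p)) l -> Ng g (component l g).
Proof.
  rewrite Forall_forall. intro Hl. apply component_ind; [apply graded_zero |].
  intros p Hp <-. auto.
Qed.

Lemma nsum_zero (D : list G) : nsum (map (fun _ => nzero N) D) = nzero N.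
Proof.
  induction D as [|g D IH]; [reflexivity |].
  unfold nsum in *; simpl. rewrite IH. apply nadd0l.
Qed.

Lemma nsum_insert (D : list G) k a (f : G -> N) :
  NoDup D -> In k D -> Ng k a -> (forall g, Ng g (f g)) -> f k = nzero N ->
  nsum (map (fun g => if deg_eq_dec k g then a else f g) D) = nadd a (nsum (map f D)).
Proof.
  intros HD; induction HD as [|g D Hg HD IH]; intros Hk Ha Hf Hfk; [destruct Hk |].
  unfold nsum in *; simpl.
  destruct (deg_eq_dec k g) as [<- | Hkg].
  - rewrite Hfk, nadd0l. f_equal. f_equal. apply map_ext_in. intros h Hh.
    destruct (deg_eq_dec k h); congruence.
  - destruct Hk as [E | Hk]; [congruence |].
    rewrite IH, !naddA, (graded_commute (not_eq_sym Hkg) (Hf g) Ha); auto.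
Qed.

Lemma nsum_components (D : list G) l :
  NoDup D -> NoDup (map fst l) -> Forall (fun p => Ng (fst p) (snd p)) l ->
  incl (map fst l) D -> nsum (map snd l) = nsum (map (component l) D).
Proof.
  intros HD. induction l as [|[k a] t IH]; intros Hl Hhom Hincl; simpl.
  - symmetry. apply nsum_zero.
  - inversion Hl as [|? ? Hk Ht]; subst. inversion Hhom as [|? ? Ha Hthom]; subst.
    rewrite nsum_insert; auto.
    + unfold nsum in *. simpl. f_equal. apply IH; auto.
      intros g Hg. apply Hincl. simpl; auto.
    + apply Hincl. simpl; auto.
    + intro g. apply component_graded. exact Hthom.
    + apply component_notin. exact Hk.
Qed.

Lemma graded_ideal_full : graded_ideal Ng (fun _ => True).
Proof.
  split; [apply ideal_full |]. intros x _.
  destruct HG as [_ [Hdec _]]. destruct (Hdec x) as [l [Hl [Hhom Hx]]].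
  exists l. repeat split; auto. eapply Forall_impl; [| exact Hhom].
  intros p Hp. split; auto.
Qed.

End Graded.

Section DirectProduct.
Variables N M : nearring.
Notation NM := (prod_nearring N M).

Definition projl (z : NM) : N := fst z.
Definition projr (z : NM) : M := snd z.
Definition embl (x : N) : NM := (x, nzero M).
Definition embr (y : M) : NM := (nzero N, y).

Lemma projl_morphism : nr_morphism projl.
Proof. split; reflexivity. Qed.

Lemma projr_morphism : nr_morphism projr.
Proof. split; reflexivity. Qed.

Lemma embl_morphism : nr_morphism embl.
Proof.
  split; intros; unfold embl; simpl; f_equal; [rewrite nadd0l | rewrite nmul0l]; reflexivity.
Qed.

Lemma embr_morphism : nr_morphism embr.
Proof.
  split; intros; unfold embr; simpl; f_equal; [rewrite nadd0l | rewrite nmul0l]; reflexivity.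
Qed.

Lemma ideal_pair (I : NM -> Prop) x y :
  ideal I -> I (x, y) <-> preim embl I x /\ preim embr I y.
Proof.
  intros HI. unfold preim, embl, embr. split.
  - intro Hxy. split.
    + assert (H := ideal_mull ((none N, nzero M) : NM) HI Hxy). simpl in H.
      rewrite nmul1l, nmul0l in H. exact H.
    + assert (H := ideal_mull ((nzero N, none M) : NM) HI Hxy). simpl in H.
      rewrite nmul1l, nmul0l in H. exact H.
  - intros [Hx Hy]. destruct HI as [[_ [Hadd _]] _].
    assert (H := Hadd _ _ Hx Hy). simpl in H. rewrite nadd0l, nadd0r in H. exact H.
Qed.

(* [(x, y) = (x, 1) (1, y)] *)
Lemma setmul_preim_projl_projr (I1 : N -> Prop) (I2 : M -> Prop) (z : NM) :
  ideal I1 -> ideal I2 ->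
  setmul (preim projl I1) (preim projr I2) z <-> I1 (fst z) /\ I2 (snd z).
Proof.
  intros H1 H2. unfold preim, projl, projr. split.
  - intros [a [b [Ha [Hb ->]]]]. simpl.
    split; [apply ideal_mulr | apply ideal_mull]; auto.
  - destruct z as [x y]. intros [Hx Hy].
    exists ((x, none M) : NM), ((none N, y) : NM). simpl.
    repeat split; auto. rewrite nmul1r, nmul1l. reflexivity.
Qed.

Lemma prodset_preim_projl (P : N -> Prop) L (z : NM) :
  prodset (map (preim projl) (P :: L)) z <-> prodset (P :: L) (projl z).
Proof.
  split; [apply prodset_preim; reflexivity |].
  destruct z as [x y]. intros [a [b [Ha [Hb E]]]]. unfold projl in E; simpl in E; subst x.
  exists ((a, y) : NM), ((b, none M) : NM). simpl. split; [exact Ha | split].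
  - apply (prodset_preim_section (pi := projl) (kappa := fun b => (b, none M)));
      simpl; auto. intros; rewrite nmul1l; reflexivity.
  - rewrite nmul1r. reflexivity.
Qed.

Lemma prodset_preim_projr (Q : M -> Prop) L (z : NM) :
  prodset (map (preim projr) (Q :: L)) z <-> prodset (Q :: L) (projr z).
Proof.
  split; [apply prodset_preim; reflexivity |].
  destruct z as [x y]. intros [a [b [Ha [Hb E]]]]. unfold projr in E; simpl in E; subst y.
  exists ((x, a) : NM), ((none N, b) : NM). simpl. split; [exact Ha | split].
  - apply (prodset_preim_section (pi := projr) (kappa := fun b => (none N, b)));
      simpl; auto. intros; rewrite nmul1l; reflexivity.
  - rewrite nmul1r. reflexivity.
Qed.

Variables (G : monoid) (Ng : G -> N -> Prop) (Mg : G -> M -> Prop).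
Hypothesis HN : graded Ng.
Hypothesis HM : graded Mg.

Lemma nsum_pair (D : list G) (f : G -> N) (h : G -> M) :
  nsum (map (fun g => ((f g, h g) : NM)) D) = (nsum (map f D), nsum (map h D)).
Proof.
  induction D as [|g D IH]; [reflexivity |].
  unfold nsum in *; cbn [map fold_right]. rewrite IH. reflexivity.
Qed.

(* Decompose both coordinates and regroup over the union of the degrees used. *)
Lemma graded_ideal_prod (R : NM -> Prop) (P : N -> Prop) (Q : M -> Prop) :
  (forall z, R z <-> P (fst z) /\ Q (snd z)) -> ideal R ->
  graded_ideal Ng P -> graded_ideal Mg Q -> graded_ideal (prod_grading Ng Mg) R.
Proof.
  intros HR HI [HPi HP] [HQi HQ]. split; [exact HI |].
  intros [x y] Hxy. apply HR in Hxy. destruct Hxy as [Hx Hy].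
  destruct (HP x Hx) as [l1 [Hl1 [Hhom1 ->]]].
  destruct (HQ y Hy) as [l2 [Hl2 [Hhom2 ->]]].
  set (D := nodup (@deg_eq_dec G) (map fst l1 ++ map fst l2)).
  assert (HD : NoDup D) by apply NoDup_nodup.
  assert (HinclD : forall l, incl l (map fst l1 ++ map fst l2) -> incl l D).
  { intros l Hl g Hg. apply nodup_In. auto. }
  assert (Hg1 : Forall (fun p => Ng (fst p) (snd p)) l1)
    by (eapply Forall_impl; [| exact Hhom1]; intros p []; auto).
  assert (Hg2 : Forall (fun p => Mg (fst p) (snd p)) l2)
    by (eapply Forall_impl; [| exact Hhom2]; intros p []; auto).
  exists (map (fun g => (g, ((component l1 g, component l2 g) : NM))) D).
  rewrite !map_map, map_id. split; [exact HD | split].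
  - apply Forall_forall. intros p Hp. apply in_map_iff in Hp.
    destruct Hp as [g [<- _]]. simpl. split; [apply HR; simpl; split | split; simpl].
    + apply component_ind; [exact (proj1 (proj1 HPi)) |].
      intros p Hp _. rewrite Forall_forall in Hhom1. apply (Hhom1 p Hp).
    + apply component_ind; [exact (proj1 (proj1 HQi)) |].
      intros p Hp _. rewrite Forall_forall in Hhom2. apply (Hhom2 p Hp).
    + exact (component_graded HN g Hg1).
    + exact (component_graded HM g Hg2).
  - simpl. rewrite nsum_pair. f_equal.
    + apply (nsum_components HN); auto. apply HinclD, incl_appl, incl_refl.
    + apply (nsum_components HM); auto. apply HinclD, incl_appr, incl_refl.
Qed.

Lemma graded_prime_preim_projl (P : N -> Prop) :
  graded_prime Ng P -> graded_prime (prod_grading Ng Mg) (preim projl P).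
Proof.
  intros HP. apply (graded_prime_preim HN (iota := embl) (e := (none N, nzero M)));
    auto using embl_morphism.
  - intros [x y]. unfold embl, projl. simpl. rewrite nmul1l, nmul0l. reflexivity.
  - intros g t [Ht _]. exact Ht.
  - intros g x Hx. split; [exact Hx | exact (graded_zero HM g)].
  - apply (graded_ideal_prod (P := P) (Q := fun _ => True)).
    + intro z. unfold preim, projl. tauto.
    + apply (ideal_preim projl_morphism). exact (proj1 (proj1 HP)).
    + exact (proj1 HP).
    + exact (graded_ideal_full HM).
Qed.

Lemma graded_prime_preim_projr (Q : M -> Prop) :
  graded_prime Mg Q -> graded_prime (prod_grading Ng Mg) (preim projr Q).
Proof.
  intros HQ. apply (graded_prime_preim HM (iota := embr) (e := (nzero N, none M)));
    auto using embr_morphism.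
  - intros [x y]. unfold embr, projr. simpl. rewrite nmul1l, nmul0l. reflexivity.
  - intros g t [_ Ht]. exact Ht.
  - intros g y Hy. split; [exact (graded_zero HN g) | exact Hy].
  - apply (graded_ideal_prod (P := fun _ => True) (Q := Q)).
    + intro z. unfold preim, projr. tauto.
    + apply (ideal_preim projr_morphism). exact (proj1 (proj1 HQ)).
    + exact (graded_ideal_full HN).
    + exact (proj1 HQ).
Qed.

Lemma prod_of_graded_primes_projl (I : N -> Prop) :
  prod_of_graded_primes Ng I -> prod_of_graded_primes (prod_grading Ng Mg) (preim projl I).
Proof.
  apply prod_of_graded_primes_preim;
    [exact graded_prime_preim_projl | exact prodset_preim_projl].
Qed.

Lemma prod_of_graded_primes_projr (I : M -> Prop) :
  prod_of_graded_primes Mg I -> prod_of_graded_primes (prod_grading Ng Mg) (preim projr I).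
Proof.
  apply prod_of_graded_primes_preim;
    [exact graded_prime_preim_projr | exact prodset_preim_projr].
Qed.

End DirectProduct.

Theorem corollary2p19 (G : monoid) (N M : nearring)
  (Ng : G -> N -> Prop) (Mg : G -> M -> Prop) :
  graded Ng -> graded Mg ->
  (forall I : N -> Prop, ideal I -> proper I -> prod_of_graded_primes Ng I) ->
  (forall I : M -> Prop, ideal I -> proper I -> prod_of_graded_primes Mg I) ->
  forall I : prod_nearring N M -> Prop, ideal I -> proper I ->
    prod_of_graded_primes (prod_grading Ng Mg) I.
Proof.
  intros HN HM HfactN HfactM I HI Hproper.
  set (I1 := preim (@embl N M) I). set (I2 := preim (@embr N M) I).
  assert (HI1 : ideal I1) by exact (ideal_preim (embl_morphism N M) HI).
  assert (HI2 : ideal I2) by exact (ideal_preim (embr_morphism N M) HI).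
  assert (Hsplit : forall z, I z <-> I1 (fst z) /\ I2 (snd z))
    by (intros [x y]; exact (ideal_pair x y HI)).
  destruct (classic (forall x, I1 x)) as [Hfull1 | Hproper1];
    destruct (classic (forall y, I2 y)) as [Hfull2 | Hproper2].
  - exfalso. apply Hproper. intro z. apply Hsplit. auto.
  - apply (prod_of_graded_primes_ext (X := preim (@projr N M) I2)).
    + intro z. rewrite Hsplit. unfold preim, projr. intuition.
    + apply prod_of_graded_primes_projr; auto.
  - apply (prod_of_graded_primes_ext (X := preim (@projl N M) I1)).
    + intro z. rewrite Hsplit. unfold preim, projl. intuition.
    + apply prod_of_graded_primes_projl; auto.
  - apply (prod_of_graded_primes_ext (X := setmul (preim (@projl N M) I1) (preim (@projr N M) I2))).
    + intro z. rewrite setmul_preim_projl_projr, Hsplit; auto. reflexivity.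
    + apply prod_of_graded_primes_setmul;
        [apply prod_of_graded_primes_projl | apply prod_of_graded_primes_projr]; auto.
Qed.
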